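(* Let $n,j,k,s\geq 1$. If $\mathsf{RT}^n_k\leq_{\mathrm{sW}}\mathsf{RT}^n_j$, then $\mathsf{RT}^n_{k^s}\leq_{\mathrm{sW}}\mathsf{RT}^n_{j^s}$.
   Context: For $n,k\geq1$, $\mathsf{RT}^n_k$ is the problem whose instances are colorings $f:[\omega]^n\to k$ and whose solutions are infinite sets $H$ with $f$ constant on $[H]^n$. $\mathsf{P}\leq_{\mathrm{sW}}\mathsf{Q}$ means there are Turing functionals $\Phi,\Psi$ such that for every instance $A$ of $\mathsf{P}$, $\Phi(A)$ is an instance of $\mathsf{Q}$, and for every solution $T$ to $\Phi(A)$, $\Psi(T)$ is a solution to $A$. *)

From mathcomp Require Import all_boot.
Set Implicit Arguments. Unset Strict Implicit. Unset Printing Implicit Defensive.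

(* Oracle partial recursive (mu-recursive) programs.  Argument lists are
   arity-free with default 0.  [POracle] queries the oracle on its first
   argument. *)
Inductive prog : Type :=
| PZero
| PSucc
| PProj of nat
| POracle
| PComp of prog & seq prog
| PPrim of prog & prog
| PMu of prog.

Inductive eval (A : nat -> nat) : prog -> seq nat -> nat -> Prop :=
| eZero args : eval A PZero args 0
| eSucc args : eval A PSucc args (head 0 args).+1
| eProj i args : eval A (PProj i) args (nth 0 args i)
| eOracle args : eval A POracle args (A (head 0 args))
| eComp g hs args ys y :
    evals A hs args ys -> eval A g ys y -> eval A (PComp g hs) args y
| ePrim0 b s rest y :
    eval A b rest y -> eval A (PPrim b s) (0 :: rest) y
| ePrimS b s x rest z y :
    eval A (PPrim b s) (x :: rest) z -> eval A s (x :: z :: rest) y ->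
    eval A (PPrim b s) (x.+1 :: rest) y
| eMu p args y :
    eval A p (y :: args) 0 ->
    (forall z, z < y -> exists v, v <> 0 /\ eval A p (z :: args) v) ->
    eval A (PMu p) args y
with evals (A : nat -> nat) : seq prog -> seq nat -> seq nat -> Prop :=
| esNil args : evals A [::] args [::]
| esCons h hs args y ys :
    eval A h args y -> evals A hs args ys -> evals A (h :: hs) args (y :: ys).

Definition computes (Phi : prog) (A B : nat -> nat) : Prop :=
  forall x, eval A Phi [:: x] (B x).

Record problem : Type := Problem {
  instance : (nat -> nat) -> Prop;
  solution : (nat -> nat) -> (nat -> nat) -> Prop (* solution A T *)
}.

Definition sW_le (P Q : problem) : Prop :=
  exists Phi Psi : prog,
    forall A, instance P A ->
      exists B, computes Phi A B /\ instance Q B /\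
        forall T, solution Q B T ->
          exists H, computes Psi T H /\ solution P A H.

(* Finite sets of naturals are coded canonically: code {x1,...,xm} = sum 2^xi.
   An element of [omega]^n is a strictly increasing list of length n. *)
Definition fcode (s : seq nat) : nat := \sum_(x <- s) 2 ^ x.

Definition nsubset (n : nat) (s : seq nat) : bool :=
  sorted ltn s && (size s == n).

(* A coloring f : [omega]^n -> k is named by c : nat -> nat with all values
   < k, where f(F) = c (fcode F). *)
Definition RT_instance (n k : nat) (c : nat -> nat) : Prop :=
  forall x, c x < k.

Definition set_name (h : nat -> nat) : Prop := forall x, h x <= 1.
Definition in_set (h : nat -> nat) (x : nat) : Prop := h x = 1.
Definition infinite_set (h : nat -> nat) : Prop :=
  forall m, exists x, m <= x /\ in_set h x.

Definition RT_solution (n : nat) (c h : nat -> nat) : Prop :=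
  set_name h /\ infinite_set h /\
  exists col : nat, forall s : seq nat,
    nsubset n s -> (forall x, x \in s -> in_set h x) -> c (fcode s) = col.

Definition RT (n k : nat) : problem :=
  Problem (RT_instance n k) (RT_solution n).

From Pilot Require Import Defs.
From mathcomp Require Import all_boot zify.
Set Implicit Arguments. Unset Strict Implicit. Unset Printing Implicit Defensive.

(* A coloring c into k^s is the same thing as s colorings into k, namely its
   base-k digits c_i = digit k i \o c.  Given a reduction (Phi, Psi) of
   RT^n_k to RT^n_j, the new forward functional runs Phi on each digit
   coloring c_i and packs the s resulting colorings B_i into j, as base-j
   digits, into one coloring into j^s; the backward functional is Psi itself.
   A set T homogeneous for the packed coloring is homogeneous for every B_i,
   so each Psi(T) is homogeneous for the corresponding c_i.  Since evaluation
   of oracle programs is deterministic, Psi(T) is one and the same set for all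
   i, and a set homogeneous for every digit of c is homogeneous for c. *)

(* The premise of [eMu]
   hides derivations under an existential, which the generated induction
   principle does not reach, so the proof is a structural recursion on the
   derivation. *)
Fixpoint eval_det A p args y (H : eval A p args y) {struct H} :
  forall y', eval A p args y' -> y = y'
with evals_det A hs args ys (H : evals A hs args ys) {struct H} :
  forall ys', evals A hs args ys' -> ys = ys'.
Proof.
- case: H.
  + by move=> a y' E; inversion E.
  + by move=> a y' E; inversion E.
  + by move=> i a y' E; inversion E.
  + by move=> a y' E; inversion E.
  + move=> g hs1 a ys0 y0 Hs Hg y' E; inversion E; subst.
    have Eys := evals_det _ _ _ _ Hs _ ltac:(eassumption); subst.
    exact: eval_det _ _ _ _ Hg _ ltac:(eassumption).
  + move=> b s0 r y0 Hb y' E; inversion E; subst.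
    exact: eval_det _ _ _ _ Hb _ ltac:(eassumption).
  + move=> b s0 x r z y0 Hp Hs y' E; inversion E; subst.
    have Ez := eval_det _ _ _ _ Hp _ ltac:(eassumption); subst.
    exact: eval_det _ _ _ _ Hs _ ltac:(eassumption).
  + move=> p0 a y0 H0 Hbelow y' E.
    inversion E as [| | | | | | |? ? ? E0 Ebelow]; subst.
    case: (ltngtP y0 y') => // lt.
    * case: (Ebelow _ lt) => v [nv Ev].
      by case: nv; rewrite (eval_det _ _ _ _ H0 _ Ev).
    * case: (Hbelow _ lt) => v [nv Ev].
      by case: nv; exact: eval_det _ _ _ _ Ev _ E0.
- case: H.
  + by move=> a ys' E; inversion E.
  + move=> h hs1 a y0 ys0 Hh Hs ys' E; inversion E; subst.
    by rewrite (eval_det _ _ _ _ Hh _ ltac:(eassumption))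
               (evals_det _ _ _ _ Hs _ ltac:(eassumption)).
Qed.

Lemma computes_unique (Phi : prog) (A B B' : nat -> nat) :
  computes Phi A B -> computes Phi A B' -> B =1 B'.
Proof. by move=> hB hB' x; exact: eval_det _ _ _ _ (hB x) _ (hB' x). Qed.

Fixpoint osub (Q : prog) (p : prog) : prog :=
  match p with
  | POracle => Q
  | PComp g hs => PComp (osub Q g) (map (osub Q) hs)
  | PPrim b s => PPrim (osub Q b) (osub Q s)
  | PMu p => PMu (osub Q p)
  | _ => p
  end.

Fixpoint osub_eval A A' Q (hQ : forall args, eval A Q args (A' (head 0 args)))
  p args y (H : eval A' p args y) {struct H} : eval A (osub Q p) args y
with osubs_eval A A' Q (hQ : forall args, eval A Q args (A' (head 0 args)))
  hs args ys (H : evals A' hs args ys) {struct H} :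
  evals A (map (osub Q) hs) args ys.
Proof.
- case: H => /=.
  + by move=> a; constructor.
  + by move=> a; constructor.
  + by move=> i a; constructor.
  + by move=> a; apply: hQ.
  + move=> g hs1 a ys0 y0 Hs Hg; econstructor.
    * exact: osubs_eval _ _ _ hQ _ _ _ Hs.
    * exact: osub_eval _ _ _ hQ _ _ _ Hg.
  + by move=> b s0 r y0 Hb; constructor; exact: osub_eval _ _ _ hQ _ _ _ Hb.
  + move=> b s0 x r z y0 Hp Hs; econstructor.
    * exact: osub_eval _ _ _ hQ _ _ _ Hp.
    * exact: osub_eval _ _ _ hQ _ _ _ Hs.
  + move=> p0 a y0 H0 Hbelow; constructor.
    * exact: osub_eval _ _ _ hQ _ _ _ H0.
    * move=> z lt; case: (Hbelow z lt) => v [nv Ev]; exists v; split => //.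
      exact: osub_eval _ _ _ hQ _ _ _ Ev.
- case: H => /=.
  + by move=> a; constructor.
  + move=> h hs1 a y0 ys0 Hh Hs; constructor.
    * exact: osub_eval _ _ _ hQ _ _ _ Hh.
    * exact: osubs_eval _ _ _ hQ _ _ _ Hs.
Qed.

Definition comp1 (g p : prog) : prog := PComp g [:: p].
Definition comp2 (g p1 p2 : prog) : prog := PComp g [:: p1; p2].

Lemma comp1_eval A g p args a y :
  eval A p args a -> eval A g [:: a] y -> eval A (comp1 g p) args y.
Proof. by move=> Hp Hg; econstructor; [constructor; [exact: Hp|constructor]|exact: Hg]. Qed.

Lemma comp2_eval A g p1 p2 args a b y :
  eval A p1 args a -> eval A p2 args b -> eval A g [:: a; b] y ->
  eval A (comp2 g p1 p2) args y.
Proof.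
move=> H1 H2 Hg; econstructor; last exact: Hg.
by constructor; [exact: H1|constructor; [exact: H2|constructor]].
Qed.

Definition constp (m : nat) : prog := iter m (comp1 PSucc) PZero.

Lemma const_eval A m args : eval A (constp m) args m.
Proof.
elim: m => [|m IH] /=; first constructor.
by apply: comp1_eval IH _; constructor.
Qed.

Definition addp : prog := PPrim (PProj 0) (comp1 PSucc (PProj 1)).

Lemma add_eval A x y rest : eval A addp (x :: y :: rest) (x + y).
Proof.
elim: x => [|x IH]; first by apply: ePrim0; constructor.
by apply: ePrimS IH _; apply: comp1_eval; constructor.
Qed.

Definition mulp : prog := PPrim PZero (comp2 addp (PProj 1) (PProj 2)).

Lemma mul_eval A x y rest : eval A mulp (x :: y :: rest) (x * y).
Proof.
elim: x => [|x IH]; first by apply: ePrim0; constructor.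
apply: ePrimS IH _; rewrite mulSn addnC.
by apply: comp2_eval; [constructor|constructor|exact: add_eval].
Qed.

Definition predp : prog := PPrim PZero (PProj 0).

Lemma pred_eval A x rest : eval A predp (x :: rest) x.-1.
Proof.
elim: x => [|x IH]; first by apply: (@ePrim0 _ _ _ _ 0); constructor.
by apply: ePrimS IH _; constructor.
Qed.

Definition rsubp : prog := PPrim (PProj 0) (comp1 predp (PProj 1)).

Lemma rsub_eval A x y rest : eval A rsubp (y :: x :: rest) (x - y).
Proof.
elim: y => [|y IH]; first by rewrite subn0; apply: ePrim0; constructor.
apply: ePrimS IH _; rewrite subnS.
by apply: comp1_eval; [constructor|exact: pred_eval].
Qed.

Definition subp : prog := comp2 rsubp (PProj 1) (PProj 0).

Lemma sub_eval A x y rest : eval A subp (x :: y :: rest) (x - y).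
Proof. by apply: comp2_eval; [constructor|constructor|exact: rsub_eval]. Qed.

(* Division by a constant [m] is unbounded search for the least [q] with
   [v < (q + 1) * m], i.e. with [v + 1 - (q + 1) * m = 0]. *)
Definition divtestp (m : nat) : prog :=
  comp2 subp (comp1 PSucc (PProj 1)) (comp2 mulp (comp1 PSucc (PProj 0)) (constp m)).

Lemma divtest_eval A m q v rest :
  eval A (divtestp m) (q :: v :: rest) (v.+1 - q.+1 * m).
Proof.
apply: comp2_eval; last exact: sub_eval.
  by apply: comp1_eval; constructor.
apply: comp2_eval; last exact: mul_eval.
  by apply: comp1_eval; constructor.
exact: const_eval.
Qed.

Definition divp (m : nat) : prog := PMu (divtestp m).

Lemma div_eval A m v rest : 0 < m -> eval A (divp m) (v :: rest) (v %/ m).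
Proof.
move=> m_gt0; constructor.
  have := divtest_eval A m (v %/ m) v rest.
  suff -> : v.+1 - (v %/ m).+1 * m = 0 by [].
  by apply/eqP; rewrite subn_eq0 ltn_ceil.
move=> q lt_q; exists (v.+1 - q.+1 * m); split; last exact: divtest_eval.
have : q.+1 * m <= v by rewrite -leq_divRL.
lia.
Qed.

Definition modp (m : nat) : prog := comp2 subp (PProj 0) (comp2 mulp (divp m) (constp m)).

Lemma mod_eval A m v rest : 0 < m -> eval A (modp m) (v :: rest) (v %% m).
Proof.
move=> m_gt0; apply: comp2_eval; [constructor| |].
  by apply: comp2_eval; [exact: div_eval|exact: const_eval|exact: mul_eval].
have -> : v %% m = v - v %/ m * m by rewrite {2}(divn_eq v m) addKn.
exact: sub_eval.
Qed.

Definition digit (b i v : nat) : nat := v %/ b ^ i %% b.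

Definition from_digits (d : nat -> nat) (s b : nat) : nat := \sum_(i < s) d i * b ^ i.

Lemma digitS b i v : digit b i.+1 v = digit b i (v %/ b).
Proof. by rewrite /digit expnS divnMA. Qed.

Lemma digit_lt b i v : 0 < b -> digit b i v < b.
Proof. exact: ltn_pmod. Qed.

Lemma from_digitsS d s b :
  from_digits d s.+1 b = d 0 + b * from_digits (fun i => d i.+1) s b.
Proof.
rewrite /from_digits big_ord_recl /= expn0 muln1 big_distrr /=; congr (_ + _).
by apply: eq_bigr => i _; rewrite expnS mulnCA.
Qed.

Lemma from_digits_lt d s b :
  0 < b -> (forall i, i < s -> d i < b) -> from_digits d s b < b ^ s.
Proof.
move=> b_gt0; elim: s d => [|s IH] d hd; first by rewrite /from_digits big_ord0.
rewrite from_digitsS expnS.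
have d0_lt := hd 0 (ltn0Sn _).
have rest_lt := IH (fun i => d i.+1) (fun i hi => hd i.+1 hi).
move: d0_lt rest_lt; set r := from_digits _ _ _; set P := b ^ s; nia.
Qed.

Lemma digit_from_digits d s b i : 0 < b -> (forall i, i < s -> d i < b) ->
  i < s -> digit b i (from_digits d s b) = d i.
Proof.
move=> b_gt0; elim: s d i => [|s IH] d i hd //; rewrite from_digitsS.
have d0_lt := hd 0 (ltn0Sn _).
case: i => [|i] hi.
  by rewrite /digit expn0 divn1 addnC mulnC modnMDl modn_small.
rewrite digitS addnC mulnC divnMDl // divn_small // addn0.
exact: (IH (fun i => d i.+1) i (fun i hi => hd i.+1 hi)).
Qed.

Lemma from_digits_digit v s b :
  0 < b -> v < b ^ s -> from_digits (fun i => digit b i v) s b = v.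
Proof.
move=> b_gt0; elim: s v => [|s IH] v hv.
  by rewrite /from_digits big_ord0; move: hv; rewrite expn0; case: v.
have hq : v %/ b < b ^ s by rewrite ltn_divLR // mulnC -expnS.
rewrite from_digitsS {3}(divn_eq v b) -(IH _ hq) /digit expn0 divn1.
rewrite addnC mulnC; congr (_ * _ + _).
by apply: eq_bigr => i _; rewrite -/(digit b i.+1 v) digitS.
Qed.

Definition digitp (b i : nat) : prog := comp1 (modp b) (divp (b ^ i)).

Lemma digit_eval A b i v rest : 0 < b -> eval A (digitp b i) (v :: rest) (digit b i v).
Proof.
move=> b_gt0; apply: comp1_eval; last exact: mod_eval.
by apply: div_eval; rewrite expn_gt0 b_gt0.
Qed.

Definition digit_oraclep (k i : nat) : prog := comp1 (digitp k i) POracle.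

Lemma digit_oracle_computes (Phi : prog) (A B : nat -> nat) (k i : nat) :
  0 < k -> computes Phi (fun x => digit k i (A x)) B ->
  computes (osub (digit_oraclep k i) Phi) A B.
Proof.
move=> k_gt0 hB x; apply: osub_eval (hB x) => args.
by apply: comp1_eval; [constructor|exact: digit_eval].
Qed.

Fixpoint digitwise (Phi : prog) (k j s : nat) : prog :=
  match s with
  | 0 => PZero
  | m.+1 => comp2 addp (digitwise Phi k j m)
                  (comp2 mulp (osub (digit_oraclep k m) Phi) (constp (j ^ m)))
  end.

Lemma digitwise_computes (Phi : prog) (A : nat -> nat) (B : nat -> nat -> nat)
    (k j s : nat) :
  0 < k -> (forall i, i < s -> computes Phi (fun x => digit k i (A x)) (B i)) ->
  computes (digitwise Phi k j s) A (fun x => from_digits (fun i => B i x) s j).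
Proof.
move=> k_gt0; elim: s => [|s IH] hB x /=; first by rewrite /from_digits big_ord0; constructor.
rewrite /from_digits big_ord_recr /= -/(from_digits _ s j).
apply: comp2_eval; [exact: IH (fun i hi => hB i (ltnW hi)) x| |exact: add_eval].
apply: comp2_eval; [|exact: const_eval|exact: mul_eval].
exact: digit_oracle_computes (hB s (ltnSn s)) x.
Qed.

(* Choice over the first [s] natural numbers, into an inhabited type;
   provable without axioms. *)
Lemma bounded_choice (T : Type) (x0 : T) (P : nat -> T -> Prop) (s : nat) :
  (forall i, i < s -> exists y, P i y) -> exists f : nat -> T, forall i, i < s -> P i (f i).
Proof.
elim: s => [|s IH] hP; first by exists (fun=> x0).
have [f hf] := IH (fun i hi => hP i (ltnW hi)).
have [y hy] := hP s (ltnSn s).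
exists (fun i => if i == s then y else f i) => i; rewrite ltnS leq_eqVlt.
by case: eqP => [-> _ //|_ /= /hf].
Qed.

Lemma RT_solution_ext (n : nat) (c h h' : nat -> nat) :
  h =1 h' -> RT_solution n c h -> RT_solution n c h'.
Proof.
move=> eq_h [h_set [h_inf [col h_col]]]; split; last split.
- by move=> x; rewrite -eq_h.
- by move=> m; have [x [le_mx hx]] := h_inf m; exists x; rewrite /Defs.in_set -eq_h.
- by exists col => F F_n F_h; apply: h_col => // x /F_h; rewrite /Defs.in_set eq_h.
Qed.

Lemma digit_instance (n k i : nat) (c : nat -> nat) :
  0 < k -> RT_instance n k (fun x => digit k i (c x)).
Proof. by move=> k_gt0 x; exact: digit_lt. Qed.

Lemma from_digits_instance (n j s : nat) (B : nat -> nat -> nat) :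
  0 < j -> (forall i, i < s -> RT_instance n j (B i)) ->
  RT_instance n (j ^ s) (fun x => from_digits (fun i => B i x) s j).
Proof. by move=> j_gt0 hB x; apply: from_digits_lt => // i /hB. Qed.

Lemma RT_solution_component (n j s i : nat) (B : nat -> nat -> nat) (h : nat -> nat) :
  0 < j -> (forall i, i < s -> RT_instance n j (B i)) -> i < s ->
  RT_solution n (fun x => from_digits (fun i => B i x) s j) h -> RT_solution n (B i) h.
Proof.
move=> j_gt0 hB lt_is [h_set [h_inf [col h_col]]]; do 2 (split => //).
exists (digit j i col) => F F_n F_h.
by rewrite -(h_col F F_n F_h) digit_from_digits // => i' /hB.
Qed.

Lemma RT_solution_of_digits (n k s : nat) (c h : nat -> nat) :
  0 < k -> 0 < s -> RT_instance n (k ^ s) c ->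
  (forall i, i < s -> RT_solution n (fun x => digit k i (c x)) h) ->
  RT_solution n c h.
Proof.
move=> k_gt0 s_gt0 hc hdig.
have [h_set [h_inf _]] := hdig 0 s_gt0.
do 2 (split => //).
have [col h_col] := bounded_choice 0 (fun i hi => (hdig i hi).2.2).
exists (from_digits col s k) => F F_n F_h.
rewrite -[c _](from_digits_digit k_gt0 (hc _)); apply: eq_bigr => i _.
by rewrite (h_col i (ltn_ord i) F F_n F_h).
Qed.

Theorem lemma3p5 (n j k s : nat) :
  0 < n -> 0 < j -> 0 < k -> 0 < s ->
  sW_le (RT n k) (RT n j) -> sW_le (RT n (k ^ s)) (RT n (j ^ s)).
Proof.
move=> _ j_gt0 k_gt0 s_gt0 [Phi [Psi red]].
exists (digitwise Phi k j s), Psi => c hc.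
have [B hB] := bounded_choice c (fun i (_ : i < s) => red _ (digit_instance n i c k_gt0)).
have B_inst : forall i, i < s -> RT_instance n j (B i) by move=> i /hB [_ []].
exists (fun x => from_digits (fun i => B i x) s j); split; last split.
- by apply: digitwise_computes => // i /hB [].
- exact: from_digits_instance.
- move=> T hT.
  have hTi i (lt_is : i < s) := RT_solution_component j_gt0 B_inst lt_is hT.
  (* All backward computations are [Psi] on [T], hence yield the same set. *)
  have [H [psiH _]] := (hB 0 s_gt0).2.2 T (hTi 0 s_gt0).
  exists H; split => //.
  apply: RT_solution_of_digits k_gt0 s_gt0 hc _ => i lt_is.
  have [Hi [psiHi solHi]] := (hB i lt_is).2.2 T (hTi i lt_is).
  exact: RT_solution_ext (computes_unique psiHi psiH) solHi.
Qed.
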